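(* Consider an $N$-player quadratic potential game under the disturbed gradient-based learning dynamics described in the context. For players $i\neq j$, player $i$ is disturbance decoupled from player $j$ if and only if player $j$ is disturbance decoupled from player $i$.
   Context: There are $N$ players, indexed by $[N]$; player $\ell$ has action $x_\ell\in\mathbb{R}^{n_\ell}$, $n=\sum_\ell n_\ell$. A quadratic game has costs $f_\ell(x)=\tfrac12 x_\ell^\top P_\ell x_\ell + x_\ell^\top\big(\sum_{m\neq \ell}P_{\ell m}x_m + r_\ell\big)$ with $P_\ell$ symmetric, $P_{\ell m}\in\mathbb{R}^{n_\ell\times n_m}$, $r_\ell\in\mathbb{R}^{n_\ell}$; it is a quadratic potential game if $P_{\ell m}=P_{m\ell}^\top$ for all $\ell\neq m$. Each player $\ell$ has step size $\gamma_\ell>0$ and updates $x_\ell^{k+1}=x_\ell^k-\gamma_\ell\big(D_\ell f_\ell(x^k)+d_\ell^k\big)$ with $D_\ell f_\ell=\partial f_\ell/\partial x_\ell$ and $d^k_\ell$ an arbitrary additive disturbance. Let $W$ be the block matrix with $W_{\ell\ell}=I-\gamma_\ell P_\ell$, $W_{\ell m}=-\gamma_\ell P_{\ell m}$, $\Gamma=\mathrm{blkdiag}(\gamma_1 I_{n_1},\ldots,\gamma_N I_{n_N})$, $\bar r=(r_1,\ldots,r_N)$. For a player $a$, let $\mathcal{D}_a=\{d\in\mathbb{R}^n : d_m=0\ \forall m\neq a\}$. The uncorrupted and corrupted dynamics (disturbance in player $a$'s gradient) are $x^{k+1}=Wx^k-\Gamma\bar r$ and $y^{k+1}=Wy^k-\Gamma\bar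 r-\Gamma d^k$ with $d^k\in\mathcal{D}_a$. Player $b\neq a$ is disturbance decoupled from player $a$ if for every initial $x^0$, with $y^0=x^0$, one has $y_b^k=x_b^k$ for all $k\ge0$ and all disturbance sequences with $d^k\in\mathcal{D}_a$. *)

From HB Require Import structures.
From mathcomp Require Import all_boot all_order all_algebra.
From mathcomp Require Import reals.
Set Implicit Arguments. Unset Strict Implicit. Unset Printing Implicit Defensive.
Import Order.TTheory GRing.Theory Num.Theory.
Local Open Scope ring_scope.

Section Game.
Variables (R : realType) (N : nat) (n : 'I_N -> nat).

Definition state := forall l : 'I_N, 'cV[R]_(n l).

(* Quadratic game data: P l = P_l, Pc l m = P_{lm} (only used for l <> m),
   r l = r_l; gamma l = step size of player l. *)
Variables (P : forall l : 'I_N, 'M[R]_(n l))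
          (Pc : forall l m : 'I_N, 'M[R]_(n l, n m))
          (r : forall l : 'I_N, 'cV[R]_(n l))
          (gamma : 'I_N -> R).

Definition partial_grad (x : state) (l : 'I_N) : 'cV[R]_(n l) :=
  P l *m x l + \sum_(m < N | m != l) Pc l m *m x m + r l.

(* One step of the disturbed gradient dynamics:
   x_l^{k+1} = x_l^k - gamma_l (D_l f_l(x^k) + d_l^k),
   i.e. blockwise x^{k+1} = W x^k - Gamma rbar - Gamma d^k. *)
Definition step (x d : state) : state :=
  fun l => x l - gamma l *: (partial_grad x l + d l).

Fixpoint traj (x0 : state) (d : nat -> state) (k : nat) : state :=
  match k with
  | 0 => x0
  | k'.+1 => step (traj x0 d k') (d k')
  end.

Definition zero_dist : nat -> state := fun _ l => 0.

Definition in_Da (a : 'I_N) (d : state) : Prop :=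
  forall m : 'I_N, m != a -> d m = 0.

Definition dist_decoupled (b a : 'I_N) : Prop :=
  forall (x0 : state) (d : nat -> state),
    (forall k, in_Da a (d k)) ->
    forall k, traj x0 d k b = traj x0 zero_dist k b.

End Game.

Definition quadratic_potential_game (R : realType) (N : nat) (n : 'I_N -> nat)
  (P : forall l : 'I_N, 'M[R]_(n l))
  (Pc : forall l m : 'I_N, 'M[R]_(n l, n m)) : Prop :=
  (forall l, (P l)^T = P l) /\
  (forall l m : 'I_N, l != m -> Pc l m = (Pc m l)^T).

(** The deviation [e^k = y^k - x^k] of the corrupted from the uncorrupted
    trajectory obeys [e^{k+1} = W e^k - Gamma d^k] with [e^0 = 0], so player [b]
    is decoupled from player [a] exactly when the [(b,a)] block of every power
    [W^k] vanishes.  In a potential game [W = I - Gamma Q] with [Q] symmetric,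
    hence [W] is self-adjoint for [<x, y> = x^T Gamma^-1 y].  Testing
    [<w, W^k z> = <W^k w, z>] with [z] supported on [b] and [w] supported on [a]
    and equal to [(W^k z)_a] gives [|(W^k z)_a|^2 / gamma_a = 0] as soon as the
    [(b,a)] blocks vanish, i.e. the [(a,b)] blocks vanish too. *)

From HB Require Import structures.
From mathcomp Require Import all_boot all_order all_algebra.
From mathcomp Require Import reals.
From mathcomp Require Import ring.
From mathcomp Require Import boolp.
Set Implicit Arguments. Unset Strict Implicit. Unset Printing Implicit Defensive.
Import Order.TTheory GRing.Theory Num.Theory.
Local Open Scope ring_scope.

Lemma trmx11 (R : nzRingType) (M : 'M[R]_1) : M^T = M.
Proof. by rewrite [M]mx11_scalar tr_scalar_mx. Qed.

Lemma trmx_mul_self_eq0 (R : realDomainType) k (u : 'cV[R]_k) :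
  u^T *m u = 0 -> u = 0.
Proof.
move=> /(congr1 (fun M : 'M_1 => M 0 0)); rewrite !mxE => sum_sq0.
have sum_sq : \sum_i u i 0 ^+ 2 = 0.
  by rewrite -[RHS]sum_sq0; apply: eq_bigr => i _; rewrite mxE expr2.
apply/matrixP => i j; rewrite ord1 mxE; apply/eqP; rewrite -sqrf_eq0.
by rewrite (psumr_eq0P (fun i _ => sqr_ge0 (u i 0)) sum_sq).
Qed.

Section GradientDynamics.
Variables (R : realType) (N : nat) (n : 'I_N -> nat).
Variables (P : forall l : 'I_N, 'M[R]_(n l))
          (Pc : forall l m : 'I_N, 'M[R]_(n l, n m))
          (r : forall l : 'I_N, 'cV[R]_(n l))
          (gamma : 'I_N -> R).

Local Notation state := (state R n).
Local Notation traj := (traj P Pc r gamma).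

Definition sub_state (x y : state) : state := fun l => x l - y l.

(* [partial_grad x l] is [lin_grad x l + r l] by conversion. *)
Definition lin_grad (x : state) (l : 'I_N) : 'cV[R]_(n l) :=
  P l *m x l + \sum_(m < N | m != l) Pc l m *m x m.

Definition Wmul (x : state) : state := fun l => x l - gamma l *: lin_grad x l.

Lemma lin_grad_sub x y l :
  lin_grad (sub_state x y) l = lin_grad x l - lin_grad y l.
Proof.
rewrite /lin_grad mulmxBr; under eq_bigr do rewrite mulmxBr.
by rewrite sumrB opprD addrACA.
Qed.

Lemma Wmul_sub x y : Wmul (sub_state x y) = sub_state (Wmul x) (Wmul y).
Proof.
apply: functional_extensionality_dep => l.
by rewrite /Wmul lin_grad_sub /sub_state scalerBr !opprD addrACA.
Qed.

Lemma iter_Wmul_sub k x y :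
  iter k Wmul (sub_state x y) = sub_state (iter k Wmul x) (iter k Wmul y).
Proof. by elim: k => //= k ->; rewrite Wmul_sub. Qed.

Definition traj_dev (x0 : state) (d : nat -> state) (k : nat) : state :=
  sub_state (traj x0 d k) (traj x0 (zero_dist R n) k).

Lemma traj_dev_step x0 d k :
  traj_dev x0 d k.+1 = sub_state (Wmul (traj_dev x0 d k)) (fun l => gamma l *: d k l).
Proof.
apply: functional_extensionality_dep => l.
rewrite /traj_dev /sub_state /Wmul /= /step lin_grad_sub.
rewrite -/(lin_grad (traj x0 d k) l) -/(lin_grad (traj x0 (zero_dist R n) k) l).
by apply/matrixP => i j; rewrite !mxE; ring.
Qed.

(* The [(b,a)] block of every power of [W] vanishes. *)
Definition Wblock0 (b a : 'I_N) : Prop :=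
  forall z : state, in_Da a z -> forall k, iter k Wmul z b = 0.

Lemma Wblock0_decoupled b a : Wblock0 b a -> dist_decoupled P Pc r gamma b a.
Proof.
move=> Wba0 x0 d dDa k.
have dev_unobservable t j : iter j Wmul (traj_dev x0 d t) b = 0.
  elim: t j => [|t IHt] j; first by rewrite iter_Wmul_sub /sub_state subrr.
  rewrite traj_dev_step iter_Wmul_sub /sub_state -iterSr IHt Wba0 ?subrr //.
  by move=> m /dDa ->; rewrite scaler0.
by apply: subr0_eq; apply: (dev_unobservable k 0%N).
Qed.

Hypothesis gamma_neq0 : forall l, gamma l != 0.

Lemma decoupled_Wblock0 b a : dist_decoupled P Pc r gamma b a -> Wblock0 b a.
Proof.
move=> dec z zDa k.
(* an impulse at time 0 that makes [e^1 = z] *)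
pose d t : state :=
  if t is 0 then fun l => - ((gamma l)^-1 *: z l) else zero_dist R n t.
have dDa t : in_Da a (d t).
  by case: t => [|t] m //= /zDa ->; rewrite scaler0 oppr0.
have dev_iter t : traj_dev (zero_dist R n 0) d t.+1 = iter t Wmul z.
  elim: t => [|t /= <-]; rewrite traj_dev_step;
    apply: functional_extensionality_dep => l; rewrite /sub_state /d /=.
  - rewrite /traj_dev /= Wmul_sub /sub_state subrr sub0r.
    by rewrite scalerN scalerA divff // scale1r opprK.
  - by rewrite /zero_dist scaler0 subr0.
by rewrite -dev_iter /traj_dev /sub_state dec ?subrr.
Qed.

Lemma decoupledE b a : dist_decoupled P Pc r gamma b a <-> Wblock0 b a.
Proof. by split; [apply: decoupled_Wblock0 | apply: Wblock0_decoupled]. Qed.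

Definition gdot (x y : state) : 'M[R]_1 :=
  \sum_l (gamma l)^-1 *: ((x l)^T *m y l).

Lemma gdotC x y : gdot x y = gdot y x.
Proof. by apply: eq_bigr => l _; rewrite -[_ *m y l]trmx11 trmx_mul trmxK. Qed.

Lemma gdot_in_Da a x y : in_Da a x -> gdot x y = (gamma a)^-1 *: ((x a)^T *m y a).
Proof.
move=> xDa; rewrite /gdot (bigD1 a) //= big1 ?addr0 // => l /xDa ->.
by rewrite trmx0 mul0mx scaler0.
Qed.

(* [x^T Q y] for the block matrix [Q] with blocks [P_l] and [P_lm],
   so that [W = I - Gamma Q]. *)
Definition Qform (x y : state) : 'M[R]_1 := \sum_l (x l)^T *m lin_grad y l.

Lemma gdot_Wmul_Qform x y : gdot x (Wmul y) = gdot x y - Qform x y.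
Proof.
rewrite /gdot /Qform -sumrB; apply: eq_bigr => l _.
by rewrite /Wmul mulmxBr scalerBr -scalemxAr scalerA mulVf ?scale1r.
Qed.

Hypothesis potential : quadratic_potential_game P Pc.

Lemma QformC x y : Qform x y = Qform y x.
Proof.
case: potential => P_sym Pc_sym; rewrite /Qform /lin_grad.
under eq_bigr do rewrite mulmxDr mulmx_sumr.
under [RHS]eq_bigr do rewrite mulmxDr mulmx_sumr.
rewrite !big_split /=; congr (_ + _).
  by apply: eq_bigr => l _; rewrite -[LHS]trmx11 !trmx_mul trmxK P_sym mulmxA.
rewrite (exchange_big_dep xpredT) //=; apply: eq_bigr => m _.
apply: eq_big => [l | l lm]; first by rewrite eq_sym.
by rewrite -[LHS]trmx11 !trmx_mul trmxK mulmxA Pc_sym 1?eq_sym ?trmxK.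
Qed.

Lemma gdot_Wmul x y : gdot x (Wmul y) = gdot (Wmul x) y.
Proof.
by rewrite gdot_Wmul_Qform [gdot (Wmul x) y]gdotC gdot_Wmul_Qform gdotC QformC.
Qed.

Lemma gdot_iter_Wmul k x y : gdot x (iter k Wmul y) = gdot (iter k Wmul x) y.
Proof. by elim: k x => //= k IHk x; rewrite gdot_Wmul IHk -iterSr. Qed.

Lemma Wblock0_sym b a : Wblock0 b a -> Wblock0 a b.
Proof.
move=> Wba0 z zDb k; set y := iter k Wmul z.
pose w : state := fun l => (l == a)%:R *: y l.
have wDa : in_Da a w by move=> m /negPf ma; rewrite /w ma scale0r.
have gdot_wy0 : gdot w y = 0.
  by rewrite gdot_iter_Wmul gdotC (gdot_in_Da _ zDb) Wba0 // mulmx0 scaler0.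
apply: trmx_mul_self_eq0; apply: (scalerI (invr_neq0 (gamma_neq0 a))).
by rewrite scaler0 -gdot_wy0 (gdot_in_Da _ wDa) /w eqxx scale1r.
Qed.

End GradientDynamics.

Theorem corollary1 (R : realType) (N : nat) (n : 'I_N -> nat)
  (P : forall l : 'I_N, 'M[R]_(n l))
  (Pc : forall l m : 'I_N, 'M[R]_(n l, n m))
  (r : forall l : 'I_N, 'cV[R]_(n l))
  (gamma : 'I_N -> R) :
  quadratic_potential_game P Pc ->
  (forall l, 0 < gamma l) ->
  forall i j : 'I_N, i != j ->
    (dist_decoupled P Pc r gamma i j <-> dist_decoupled P Pc r gamma j i).
Proof.
move=> potential gamma_gt0 i j _.
have gamma_neq0 l : gamma l != 0 by rewrite gt_eqF.
rewrite !(decoupledE P Pc r gamma_neq0).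
by split; apply: Wblock0_sym gamma_neq0 potential _ _.
Qed.
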